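(* Let $G$ be a finitely generated residually finite group and $\phi\in\operatorname{Aut}(G)$. If $\operatorname{Stab}_\phi(g)$ is infinite for some $g\in G$, then $R(\phi)=\infty$.
   Context: For an endomorphism $\phi$ of $G$, $R(\phi)\in\mathbb{N}\cup\{\infty\}$ is the number of classes of the relation $x\sim hx\phi(h)^{-1}$ ($h\in G$). The $\phi$-stabiliser of $g\in G$ is $\operatorname{Stab}_\phi(g)=\{b\in G\mid g=bg\phi(b)^{-1}\}$. *)

From mathcomp Require Import all_boot all_fingroup.
From Stdlib Require Import List.
Set Implicit Arguments. Unset Strict Implicit. Unset Printing Implicit Defensive.

Record AbsGroup := MkAbsGroup {
  carrier :> Type;
  gmul : carrier -> carrier -> carrier;
  gone : carrier;
  ginv : carrier -> carrier;
  gmulA : forall x y z, gmul x (gmul y z) = gmul (gmul x y) z;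
  gmul1l : forall x, gmul gone x = x;
  gmul1r : forall x, gmul x gone = x;
  gmulVl : forall x, gmul (ginv x) x = gone;
  gmulVr : forall x, gmul x (ginv x) = gone
}.

Section Defs.
Variable G : AbsGroup.

Inductive generated (S : list G) : G -> Prop :=
  | gen_one : generated S (gone G)
  | gen_in : forall s, In s S -> generated S s
  | gen_mul : forall x y, generated S x -> generated S y -> generated S (gmul x y)
  | gen_inv : forall x, generated S x -> generated S (ginv x).

Definition finitely_generated : Prop :=
  exists S : list G, forall x : G, generated S x.

Definition residually_finite : Prop :=
  forall g : G, g <> gone G ->
    exists (H : finGroupType) (f : G -> H),
      (forall x y, f (gmul x y) = (f x * f y)%g) /\ f g <> 1%g.

Definition is_hom (phi : G -> G) : Prop :=
  forall x y, phi (gmul x y) = gmul (phi x) (phi y).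

Definition is_automorphism (phi : G -> G) : Prop :=
  is_hom phi /\ (forall x y, phi x = phi y -> x = y) /\ (forall y, exists x, phi x = y).

Definition twisted_conj (phi : G -> G) (x y : G) : Prop :=
  exists h : G, y = gmul (gmul h x) (ginv (phi h)).

Definition reidemeister_infinite (phi : G -> G) : Prop :=
  ~ exists L : list G, forall x : G, exists y, In y L /\ twisted_conj phi y x.

Definition Stab (phi : G -> G) (g : G) : G -> Prop :=
  fun b => g = gmul (gmul b g) (ginv (phi b)).

Definition infinite_set (P : G -> Prop) : Prop :=
  ~ exists L : list G, forall x, P x -> In x L.
End Defs.

(* Suppose the twisted classes of G have finitely many representatives L, and let
   M be Landau's bound for a finite group acting on itself with at most size L
   orbits (Landau's theorem on unit fractions applied to the orbit equation).
   Pick M+1 distinct elements of Stab_phi(g) and, by residual finiteness, a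
   morphism f from G to a finite group H injective on them.  As G is finitely
   generated, f o phi^p = f for some p > 0, so the unfolding
   F h = (f (phi^k h))_(k < p) maps G onto a finite subgroup X of H^p and turns
   phi into the cyclic shift.  Then twisted conjugacy in G becomes an action of
   X on itself with at most size L orbits, whose stabiliser at F g contains the
   M+1 distinct images of Stab_phi(g) -- contradicting Landau's bound. *)

From Pilot Require Import Defs.
From mathcomp Require Import all_boot all_fingroup zify.
From Stdlib Require Import Classical.
From Stdlib Require List.
Set Implicit Arguments. Unset Strict Implicit. Unset Printing Implicit Defensive.

Definition morphic (G : AbsGroup) (H : finGroupType) (f : G -> H) : Prop :=
  forall x y, f (gmul x y) = (f x * f y)%g.

Section Morphic.
Variables (G : AbsGroup) (H : finGroupType) (f : G -> H).
Hypothesis f_morphic : morphic f.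

Lemma morph1 : f (gone G) = 1%g.
Proof.
apply: (mulgI (f (gone G))).
by rewrite -f_morphic gmul1l mulg1.
Qed.

Lemma morphV (x : G) : f (ginv x) = (f x)^-1%g.
Proof. by apply: (mulIg (f x)); rewrite -f_morphic gmulVl morph1 mulVg. Qed.

End Morphic.

Lemma morphic_gen_eq (G : AbsGroup) (H : finGroupType) (f1 f2 : G -> H) S :
  (forall x, Defs.generated S x) -> morphic f1 -> morphic f2 ->
  (forall s, List.In s S -> f1 s = f2 s) -> forall x, f1 x = f2 x.
Proof.
move=> genS m1 m2 eqS x; elim: (genS x) => [|s /eqS //|y z _ e1 _ e2|y _ e].
- by rewrite !morph1.
- by rewrite m1 m2 e1 e2.
- by rewrite !morphV // e.
Qed.

Lemma morphic_trivial (G : AbsGroup) : morphic (fun _ : G => 1%g : {perm unit}).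
Proof. by move=> x y; rewrite mulg1. Qed.

Lemma morphic_pair (G : AbsGroup) (H1 H2 : finGroupType) (f1 : G -> H1) (f2 : G -> H2) :
  morphic f1 -> morphic f2 -> morphic (fun x => (f1 x, f2 x)).
Proof. by move=> m1 m2 x y; rewrite m1 m2. Qed.

Lemma rf_separate_from (G : AbsGroup) (b : G) (l : list G) :
  residually_finite G -> exists (H : finGroupType) (f : G -> H),
    morphic f /\ forall y, List.In y l -> y <> b -> f y <> f b.
Proof.
move=> rf; elim: l => [|y l [H1 [f1 [m1 sep1]]]].
  by exists {perm unit}, (fun _ => 1%g); split; [apply: morphic_trivial|].
have [->|yb] := classic (y = b).
  exists H1, f1; split=> // z [<-|zl] zb; [by case: zb | exact: sep1].
have yb1 : gmul y (ginv b) <> gone G.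
  by move=> e; apply: yb; rewrite -[y]gmul1r -(gmulVl b) gmulA e gmul1l.
have [H2 [f2 [m2 f2yb]]] := rf _ yb1.
exists (H1 * H2)%type, (fun x => (f1 x, f2 x)); split; first exact: morphic_pair.
move=> z [<-|zl] zb [e1 e2]; last exact: sep1 zl zb e1.
by apply: f2yb; rewrite m2 morphV // e2 mulgV.
Qed.

Lemma rf_separate (G : AbsGroup) (l : list G) :
  residually_finite G -> exists (H : finGroupType) (f : G -> H),
    morphic f /\ forall x y, List.In x l -> List.In y l -> f x = f y -> x = y.
Proof.
move=> rf; elim: l => [|b l [H1 [f1 [m1 inj1]]]].
  by exists {perm unit}, (fun _ => 1%g); split; [apply: morphic_trivial|].
have [H2 [f2 [m2 sep2]]] := rf_separate_from b l rf.
exists (H1 * H2)%type, (fun x => (f1 x, f2 x)); split; first exact: morphic_pair.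
move=> x y hx hy /pair_equal_spec[e1 e2].
case: hx => [b_x|xl]; case: hy => [b_y|yl]; rewrite -?b_x -?b_y in e2 * => //.
- by apply: NNPP => yb; apply: (sep2 y yl (nesym yb)); rewrite e2.
- by apply: NNPP => xb; apply: (sep2 x xl xb); rewrite e2.
- exact: inj1.
Qed.

Lemma iter_hom (G : AbsGroup) (phi : G -> G) (k : nat) : is_hom phi ->
  forall x y, iter k phi (gmul x y) = gmul (iter k phi x) (iter k phi y).
Proof. by move=> hom_phi; elim: k => [//|k IH] x y /=; rewrite IH hom_phi. Qed.

Lemma iter_surjective (T : Type) (h : T -> T) (k : nat) :
  (forall y, exists x, h x = y) -> forall y, exists x, iter k h x = y.
Proof.
move=> surj; elim: k => [|k IH] y; first by exists y.
have [z <-] := surj y; have [x <-] := IH z; by exists x.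
Qed.

(* For a finitely generated G, a morphic f to a finite group and an automorphism
   phi, f o phi^p = f for some p > 0: the maps f o phi^k are determined by their
   values on the generators, so only finitely many of them are distinct. *)
Lemma aut_period (G : AbsGroup) (S : list G) (H : finGroupType) (f : G -> H) phi :
  (forall x, Defs.generated S x) -> morphic f -> is_automorphism phi ->
  exists2 p, 0 < p & forall x, f (iter p phi x) = f x.
Proof.
move=> genS mf [hom_phi [_ surj_phi]].
pose N := #|{: (size S).-tuple H}|.
pose c (k : 'I_N.+1) := map_tuple (fun s => f (iter k phi s)) (in_tuple S).
have /injectivePn [i [j neq_ij cij]] : ~~ injectiveb c.
  by apply/injectiveP => /leq_card; rewrite card_ord ltnn.
have same (k l : 'I_N.+1) : c k = c l -> forall x, f (iter k phi x) = f (iter l phi x).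
  move=> ckl; apply: (morphic_gen_eq genS).
  - by move=> x y; rewrite iter_hom // mf.
  - by move=> x y; rewrite iter_hom // mf.
  - by apply/List.map_ext_in_iff; apply: (congr1 val ckl).
wlog lt_ij : i j neq_ij cij / i < j.
  move=> wlog; case: (ltngtP i j) => [|gt_ij|/val_inj eq_ij]; first exact: wlog.
  - by apply: (wlog j i); rewrite // eq_sym.
  - by rewrite eq_ij eqxx in neq_ij.
exists (j - i); first by rewrite subn_gt0.
move=> x; have [y <-] := iter_surjective i surj_phi x.
by rewrite -iterD subnK ?(same i j) // ltnW.
Qed.

Section TwistedAction.
Variables (H : finGroupType) (p : nat).
Local Notation T := {dffun 'I_p -> H}.

Definition shift (u : T) : T := [ffun k => u (ordS k)].

Lemma shiftM (u v : T) : shift (u * v)%g = (shift u * shift v)%g.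
Proof. by apply/ffunP => k; rewrite !ffunE. Qed.

Lemma shiftV (u : T) : shift u^-1%g = (shift u)^-1%g.
Proof. by apply/ffunP => k; rewrite !ffunE. Qed.

Lemma shift1 : shift 1%g = 1%g.
Proof. by apply/ffunP => k; rewrite !ffunE. Qed.

(* The shift-twisted conjugation action y |-> u^-1 y shift(u) of H^p on itself;
   its orbits are the twisted conjugacy classes of the shift. *)
Definition twist (y u : T) : T := (u^-1 * y * shift u)%g.

Lemma twist1 : twist^~ 1%g =1 id.
Proof. by move=> y; rewrite /twist shift1 invg1 mul1g mulg1. Qed.

Lemma twistM (y : T) : @act_morph [the finGroupType of T] T twist y.
Proof. by move=> u v; rewrite /twist shiftM invMg !mulgA. Qed.

Definition twisted_action := TotalAction twist1 twistM.

End TwistedAction.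

Lemma infinite_set_lists (G : AbsGroup) (P : G -> Prop) (n : nat) : infinite_set P ->
  exists l : list G, size l = n /\ List.NoDup l /\ forall x, List.In x l -> P x.
Proof.
move=> infP; elim: n => [|n [l [size_l [nd_l Pl]]]]; first by exists [::]; split; [|split; [constructor|]].
have [x [Px xl]] : exists x, P x /\ ~ List.In x l.
  apply: NNPP => none; apply: infP; exists l => x Px.
  by apply: NNPP => xl; apply: none; exists x.
exists (x :: l); split; first by rewrite /= size_l.
by split; [constructor | move=> y [<-|/Pl]].
Qed.

Lemma In_mem (T : eqType) (x : T) (s : seq T) : List.In x s <-> x \in s.
Proof.
elim: s => [//|a s IH]; rewrite inE /=.
split=> [[->|/IH ->]|/orP[/eqP->|/IH]]; rewrite ?eqxx ?orbT; auto.
Qed.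

Lemma NoDup_uniq (T : eqType) (s : seq T) : List.NoDup s -> uniq s.
Proof.
elim: s => [//|a s IH] /List.NoDup_cons_iff [a_s nd_s] /=.
by rewrite IH // andbT; apply/negP => /In_mem.
Qed.

(* The recursive bound in Landau's theorem on unit fractions: if k unit fractions
   1/x_i sum to C/A, the smallest x_i is at most A*k/C <= A*k, and the other k-1
   sum to (C x - A)/(A x), a fraction with denominator at most A*(A*k). *)
Fixpoint landau_aux (k A : nat) : nat :=
  if k is k'.+1 then maxn (A * k) (landau_aux k' (A * (A * k))) else 0.

Lemma landau_aux_mono (k : nat) : {homo landau_aux k : A B / A <= B}.
Proof.
elim: k => [//|k IH] A B le_AB /=.
by rewrite geq_max !leq_max leq_mul // IH ?orbT // !leq_mul.
Qed.

Lemma landau_step (m t rest K A C : nat) : 0 < m -> 0 < C ->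
  m + rest <= K * m -> A * (m + rest) = C * (t * m) ->
  [/\ t <= A * K, A <= C * t & A * t * rest = (C * t - A) * (t * m)].
Proof.
move=> m_gt0 C_gt0 le_sum eq_sum.
have le_CtAK : C * t <= A * K.
  by rewrite -(leq_pmul2r m_gt0) -mulnA -eq_sum -mulnA leq_mul2l le_sum orbT.
have le_ACt : A <= C * t.
  by rewrite -(leq_pmul2r m_gt0) -mulnA -eq_sum leq_mul2l leq_addr orbT.
split=> //; first by apply: leq_trans le_CtAK; rewrite leq_pmull.
by rewrite mulnBl; nia.
Qed.

Lemma landau (T : finType) (w : T -> nat) (n k : nat) :
  forall (D : {set T}) (A C : nat), #|D| = k -> 0 < A -> 0 < C ->
  {in D, forall i, (0 < w i) && (w i %| n)} -> A * (\sum_(i in D) w i) = C * n ->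
  {in D, forall i, n %/ w i <= landau_aux k A}.
Proof.
elim: k => [|k IH] D A C card_D A_gt0 C_gt0 div_w sum_w i iD.
  by rewrite (cards0_eq card_D) inE in iD.
case: (arg_maxnP w iD) => m; rewrite -/(m \in D) => mD max_m.
have /andP[wm_gt0 wm_n] := div_w m mD.
set t := n %/ w m.
have n_eq : n = t * w m by rewrite divnK.
have sum_split : \sum_(j in D) w j = w m + \sum_(j in D :\ m) w j.
  by rewrite (big_setD1 m mD).
have le_sum : w m + \sum_(j in D :\ m) w j <= k.+1 * w m.
  by rewrite -sum_split -card_D -sum_nat_const leq_sum.
have eq_sum : A * (w m + \sum_(j in D :\ m) w j) = C * (t * w m).
  by rewrite -sum_split -n_eq.
have [le_t le_ACt] := landau_step wm_gt0 C_gt0 le_sum eq_sum.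
rewrite -n_eq => eq_rest.
rewrite /= leq_max; have [->|neq_im] := eqVneq i m; first by rewrite le_t.
have iDm : i \in D :\ m by rewrite in_setD1 neq_im.
have div_rest : {in D :\ m, forall j, (0 < w j) && (w j %| n)}.
  by move=> j /setD1P[_ /div_w].
have card_Dm : #|D :\ m| = k by move: card_D; rewrite (cardsD1 m) mD => -[].
have [lt_ACt|] := ltnP A (C * t).
  have At_gt0 : 0 < A * t.
    by rewrite muln_gt0 A_gt0; move: (leq_trans A_gt0 le_ACt); rewrite muln_gt0 => /andP[].
  have CtA_gt0 : 0 < C * t - A by rewrite subn_gt0.
  have := IH _ _ _ card_Dm At_gt0 CtA_gt0 div_rest eq_rest i iDm.
  move/leq_trans => le_wi; apply/orP; right; apply: le_wi.
  by rewrite landau_aux_mono // leq_mul2l le_t orbT.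
move=> le_CtA; have Ct_eq : C * t = A by apply/eqP; rewrite eqn_leq le_CtA.
have /andP[wi_gt0 _] := div_rest i iDm.
have : \sum_(j in D :\ m) w j = 0.
  by move: eq_rest; rewrite Ct_eq subnn mul0n => /eqP; rewrite !muln_eq0; nia.
move/eqP; rewrite sum_nat_eq0 => /forall_inP/(_ i iDm)/eqP wi0.
by rewrite wi0 in wi_gt0.
Qed.

Definition landau_bound (r : nat) : nat := \max_(k < r.+1) landau_aux k 1.

(* A finite group acting on itself with at most r orbits has stabilisers of
   order at most landau_bound r: orbit sizes are divisors of #|X| summing to
   #|X|, and #|X| / #|orbit| is the order of the stabiliser. *)
Lemma stabiliser_bound (gT : finGroupType) (X : {group gT}) (to : {action gT &-> gT})
    (r : nat) (x : gT) :
  [acts X, on X | to] -> #|orbit to X @: X| <= r -> x \in X ->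
  #|'C_X[x | to]%g| <= landau_bound r.
Proof.
move=> actsX orbits_r xX.
have orbit_gt0 y : 0 < #|orbit to X y|.
  by rewrite card_gt0; apply/set0Pn; exists y; apply: orbit_refl.
have div_orbits : {in orbit to X @: X, forall O : {set gT}, (0 < #|O|) && (#|O| %| #|X|)}.
  by move=> _ /imsetP[y _ ->]; rewrite orbit_gt0 dvdn_orbit.
have sum_orbits : 1 * \sum_(O in orbit to X @: X) #|O| = 1 * #|X|.
  by rewrite !mul1n (acts_sum_card_orbit actsX).
have := landau (A := 1) (C := 1) erefl isT isT div_orbits sum_orbits (imset_f _ xX).
rewrite -(card_orbit_stab to X x) mulKn // => /leq_trans; apply.
have lt_orbits : #|orbit to X @: X| < r.+1 by rewrite ltnS.
rewrite /landau_bound.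
by apply: (@leq_bigmax _ (fun k : 'I_r.+1 => landau_aux k 1) (Ordinal lt_orbits)).
Qed.

Section Unfolding.
Variables (G : AbsGroup) (phi : G -> G) (S : list G) (H : finGroupType) (f : G -> H).
Variable p : nat.
Hypotheses (genS : forall x, Defs.generated S x) (hom_phi : is_hom phi).
Hypotheses (f_morphic : morphic f) (f_period : forall x, f (iter p phi x) = f x).
Local Notation T := {dffun 'I_p -> H}.
Local Notation to := (twisted_action H p).

(* Unfolding f along phi-orbits: h |-> (f (phi^k h))_(k < p).  Since f o phi^p = f,
   this turns phi into the cyclic shift of coordinates. *)
Definition unfold (h : G) : T := [ffun k : 'I_p => f (iter k phi h)].

Lemma unfold_morphic : morphic unfold.
Proof. by move=> x y; apply/ffunP => k; rewrite !ffunE iter_hom // f_morphic. Qed.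

Lemma unfold_phi (h : G) : unfold (phi h) = shift (unfold h).
Proof.
apply/ffunP => k; rewrite !ffunE -iterSr /ordS /=.
have [lt_kp|] := ltnP k.+1 p; first by rewrite modn_small.
move=> le_pk; have eq_kp : k.+1 = p by apply/eqP; rewrite eqn_leq le_pk ltn_ord.
by rewrite eq_kp modnn -iterS eq_kp f_period.
Qed.

Lemma unfold_eq (x y : G) : 0 < p -> unfold x = unfold y -> f x = f y.
Proof. by move=> p_gt0 /(congr1 (fun u : T => u (Ordinal p_gt0))); rewrite !ffunE. Qed.

Definition unfold_group : {group T} := <<[set u | u \in map unfold S]>>%G.

Lemma unfold_mem (h : G) : unfold h \in unfold_group.
Proof.
elim: (genS h) => [|s sS|y z _ yX _ zX|y _ yX].
- by rewrite morph1 ?group1 //; apply: unfold_morphic.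
- by apply: mem_gen; rewrite inE; apply/In_mem/List.in_map.
- by rewrite unfold_morphic groupM.
- by rewrite morphV ?groupV //; apply: unfold_morphic.
Qed.

Lemma unfold_onto (u : T) : u \in unfold_group -> exists h, unfold h = u.
Proof.
move=> /gen_prodgP [n [c c_gen ->]].
apply: (big_ind (fun v => exists h, unfold h = v)).
- by exists (gone G); rewrite morph1 //; apply: unfold_morphic.
- by move=> _ _ [h1 <-] [h2 <-]; exists (gmul h1 h2); rewrite unfold_morphic.
move=> i _; move: (c_gen i); rewrite inE => /In_mem/List.in_map_iff[s [<- _]].
by exists s.
Qed.

Lemma shift_unfold_group (u : T) : u \in unfold_group -> shift u \in unfold_group.
Proof. by move=> /unfold_onto [h <-]; rewrite -unfold_phi unfold_mem. Qed.

Lemma twisted_acts : [acts unfold_group, on unfold_group | to].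
Proof.
apply/actsP => u uX y; rewrite /= /twist.
have shift_uX := shift_unfold_group uX.
apply/idP/idP => [yX|]; last by move=> yX; rewrite !groupM ?groupV.
have -> : y = (u * (u^-1 * y * shift u) * (shift u)^-1)%g.
  by rewrite !mulgA mulgV mul1g mulgK.
by rewrite groupM ?groupV // groupM.
Qed.

Lemma unfold_twisted_conj (x y : G) : twisted_conj phi y x ->
  orbit to unfold_group (unfold x) = orbit to unfold_group (unfold y).
Proof.
move=> [h ->]; apply/orbit_eqP.
apply/orbitP; exists (unfold h)^-1%g; first by rewrite groupV unfold_mem.
by rewrite /= /twist invgK !unfold_morphic morphV ?unfold_phi ?shiftV //; apply: unfold_morphic.
Qed.

Lemma unfold_orbits (L : list G) :
  (forall x, exists y, List.In y L /\ twisted_conj phi y x) ->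
  #|orbit to unfold_group @: unfold_group| <= size L.
Proof.
move=> cover_L.
have sub : orbit to unfold_group @: unfold_group \subset
    [set orbit to unfold_group u | u in map unfold L].
  apply/subsetP => _ /imsetP[_ /unfold_onto[x <-] ->].
  have [y [yL xy]] := cover_L x.
  by rewrite (unfold_twisted_conj xy) imset_f //; apply/In_mem/List.in_map.
apply: leq_trans (subset_leq_card sub) _.
by apply: leq_trans (leq_imset_card _ _) _; rewrite (leq_trans (card_size _)) ?size_map.
Qed.

Lemma unfold_stab (g b : G) : Stab phi g b -> unfold b \in 'C_unfold_group[unfold g | to]%g.
Proof.
move=> stab_b; rewrite inE unfold_mem; apply/astab1P; rewrite /= /twist -unfold_phi.
have eq_g : unfold g = (unfold b * unfold g * (unfold (phi b))^-1)%g.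
  by rewrite {1}stab_b !unfold_morphic morphV //; apply: unfold_morphic.
by rewrite {1}eq_g !mulgA mulVg mul1g mulgKV.
Qed.

Lemma stab_list_card (g : G) (bs : list G) : 0 < p -> List.NoDup bs ->
  (forall b, List.In b bs -> Stab phi g b) ->
  (forall x y, List.In x bs -> List.In y bs -> f x = f y -> x = y) ->
  size bs <= #|'C_unfold_group[unfold g | to]%g|.
Proof.
move=> p_gt0 nd_bs stab_bs f_inj.
have uniq_bs : uniq (map unfold bs).
  apply/NoDup_uniq/List.NoDup_map_NoDup_ForallPairs => // x y xb yb.
  by move/(unfold_eq p_gt0); apply: f_inj.
rewrite -(size_map unfold) cardE; apply: uniq_leq_size uniq_bs _.
move=> _ /In_mem/List.in_map_iff[b [<- bb]]; rewrite mem_enum.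
exact: unfold_stab (stab_bs b bb).
Qed.

End Unfolding.

Theorem mainTheorem10 (G : AbsGroup) (phi : G -> G) :
  finitely_generated G -> residually_finite G -> is_automorphism phi ->
  (exists g : G, infinite_set (Stab phi g)) ->
  reidemeister_infinite phi.
Proof.
move=> [S genS] rf aut [g inf_stab] [L cover_L].
pose M := landau_bound (size L).
have [bs [size_bs [nd_bs stab_bs]]] := infinite_set_lists M.+1 inf_stab.
have [H [f [f_morphic f_inj]]] := rf_separate bs rf.
have [p p_gt0 f_period] := aut_period genS f_morphic aut.
have [hom_phi _] := aut.
have small := stabiliser_bound (twisted_acts genS hom_phi f_morphic f_period)
  (unfold_orbits genS hom_phi f_morphic f_period cover_L)
  (unfold_mem p genS hom_phi f_morphic g).
have large := stab_list_card genS hom_phi f_morphic f_period p_gt0 nd_bs stab_bs f_inj.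
by move: (leq_trans large small); rewrite size_bs ltnn.
Qed.
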